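(* Let $s$ and $n$ be positive integers, let $f:\mathbb{N}\to\mathbb{C}$ be an arithmetical function, and let $f'(k)=\sum_{d\mid k}\mu(d)f(k/d)$. If $$\sum_{q=1}^{\infty}\sum_{m=1}^{\infty}\frac{|f'(mq)|}{(mq)^s}\,\bigl|c_q^{(s)}(n^s)\bigr|<\infty,$$ then $$\sum_{k=1}^{\infty}2^{\omega(k)}\frac{|f'(k)|}{k^s}<\infty .$$
   Context: For positive integers $a,b,s$, the generalized gcd $(a,b)_s$ is the largest $d^s$ ($d\in\mathbb{N}$) such that $d^s\mid a$ and $d^s\mid b$. The Cohen–Ramanujan sum is defined for positive integers $q,n,s$ by $$c_q^{(s)}(n)=\sum_{\substack{h=1\\ (h,q^s)_s=1}}^{q^s} e^{2\pi i n h/q^s}.$$ $\mu$ is the Möbius function and $\omega(k)$ is the number of distinct prime divisors of $k$. *)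

From HB Require Import structures.
From mathcomp Require Import all_boot all_order all_algebra.
From mathcomp Require Import all_classical all_reals all_analysis.
From mathcomp Require Import complex.

Set Implicit Arguments.
Unset Strict Implicit.
Unset Printing Implicit Defensive.

Import Order.TTheory GRing.Theory Num.Theory.

Local Open Scope ring_scope.

(* Möbius function. mu 0 := 0 (never used). *)
Definition moebius (k : nat) : int :=
  if k == 0%N then 0
  else if all (fun p => logn p k <= 1)%N (primes k)
       then (-1) ^+ size (primes k) else 0.

Definition omega (k : nat) : nat := size (primes k).

(* Generalized gcd (a,b)_s: the largest d^s (d in N) with d^s | a and d^s | b
   (for a, b positive, such d satisfy d <= a, so the bounded max is exact). *)
Definition gen_gcd (s a b : nat) : nat :=
  ((\max_(d < (a + b).+1 | (0 < (d : nat)) && ((d : nat) ^ s %| a) && ((d : nat) ^ s %| b)) (d : nat)) ^ s)%N.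

Definition expi2pi {R : realType} (x : R) : R[i] :=
  (cos (2 * pi * x) +i* sin (2 * pi * x))%C.

Definition cohen_ramanujan {R : realType} (s q n : nat) : R[i] :=
  \sum_(1 <= h < (q ^ s).+1 | gen_gcd s h (q ^ s) == 1%N)
     expi2pi ((n * h)%:R / (q ^ s)%:R : R).

Definition fprime {R : realType} (f : nat -> R[i]) (k : nat) : R[i] :=
  \sum_(d <- divisors k) (moebius d)%:~R * f (k %/ d)%N.

Definition cabs {R : realType} (z : R[i]) : R := Normc.normc z.

(* Since h |-> (h, q^s)_s = 1 is multiplicative in q, the Chinese remainder
   theorem makes q |-> c_q^{(s)}(N) multiplicative.  For a prime p the sum of
   e(N h / p^s) over all residues h mod p^s is 0 or p^s, and c_p^{(s)}(N) is
   that sum minus 1, so |c_p^{(s)}(N)| >= 1.  Multiplicativity then gives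
   2^omega(k) <= sum_{q | k} |c_q^{(s)}(N)| for every k, and the series of the
   conclusion is dominated term by term by the double series of the hypothesis
   after grouping its terms according to k = m q.  The argument works for
   every N. *)
From HB Require Import structures.
From mathcomp Require Import all_boot all_order all_algebra.
From mathcomp Require Import all_classical all_reals all_analysis.
From mathcomp Require Import complex.
From mathcomp Require Import ring zify.

Import Order.TTheory GRing.Theory Num.Theory.

Local Open Scope ring_scope.

Section Complex.
Variable R : realType.
Local Notation e := (@expi2pi R).

Lemma expi2piD (x y : R) : e (x + y) = e x * e y.
Proof.
rewrite /expi2pi mulrDr cosD sinD; simpc; congr (_ +i* _)%C; ring.
Qed.

Lemma expi2pi0 : e 0 = 1.
Proof. by rewrite /expi2pi mulr0 cos0 sin0. Qed.

Lemma expi2pi1 : e 1 = 1.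
Proof. by rewrite /expi2pi mulr1 (_ : 2 * pi = pi *+ 2) ?cos2pi ?sin2pi // mulr_natl. Qed.

Lemma expi2piMn (k : nat) (x : R) : e (k%:R * x) = e x ^+ k.
Proof.
elim: k => [|k IHk]; first by rewrite mul0r expi2pi0 expr0.
by rewrite -addn1 natrD mulrDl mul1r expi2piD IHk addn1 exprSr.
Qed.

Lemma expi2pi_nat (k : nat) : e k%:R = 1.
Proof. by rewrite -[k%:R]mulr1 expi2piMn expi2pi1 expr1n. Qed.

Lemma expi2pi_modn (N k M : nat) : (0 < M)%N ->
  e ((N * (k %% M))%:R / M%:R) = e ((N * k)%:R / M%:R).
Proof.
move=> M_gt0; have M_neq0 : (M%:R : R) != 0 by rewrite pnatr_eq0 -lt0n.
rewrite {2}(divn_eq k M) addnC mulnDr mulnA natrD [(_ * M)%:R]natrM mulrDl mulfK //.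
by rewrite expi2piD expi2pi_nat mulr1.
Qed.

Lemma cabs_normr (z : R[i]) : (cabs z)%:C%C = `|z|.
Proof. by case: z. Qed.

Lemma cabs_ge0 (z : R[i]) : 0 <= cabs z.
Proof. by rewrite -lecR cabs_normr normr_ge0. Qed.

End Complex.

Definition pow_coprime (s q h : nat) : bool :=
  all (fun p => ~~ (p ^ s %| h)%N) (primes q).

Lemma gen_gcd_eq1 (s q h : nat) : (0 < s)%N -> (0 < q)%N -> (0 < h)%N ->
  (gen_gcd s h (q ^ s) == 1)%N = pow_coprime s q h.
Proof.
move=> s_gt0 q_gt0 h_gt0; rewrite /gen_gcd -{2}(exp1n s) eqn_exp2r //.
pose P (d : 'I_(h + q ^ s).+1) := [&& 0 < d, d ^ s %| h & d ^ s %| q ^ s]%N.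
rewrite (eq_bigl P); last by move=> d; rewrite /P andbA.
have lt1 : (1 < (h + q ^ s).+1)%N by rewrite ltnS addn_gt0 h_gt0.
apply/idP/allP.
- move/eqP=> max1 p; rewrite mem_primes => /and3P [p_pr _ pq].
  apply/negP => psh.
  have ltp : (p < (h + q ^ s).+1)%N.
    rewrite ltnS; apply: leq_trans (leq_addr _ _); apply: leq_trans (dvdn_leq h_gt0 psh).
    by rewrite -[X in (X <= _)%N]expn1 leq_pexp2l ?(prime_gt0 p_pr).
  have : (p <= 1)%N.
    rewrite -max1; apply: (@leq_bigmax_cond _ P _ (Ordinal ltp)).
    by rewrite /P /= prime_gt0 // psh dvdn_exp2r.
  by rewrite leqNgt prime_gt1.
- move=> coprime_hq; rewrite eqn_leq; apply/andP; split; last first.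
    by apply: (leq_bigmax_cond (Ordinal lt1)); rewrite /P /= !exp1n !dvd1n.
  apply/bigmax_leqP => d /and3P [d_gt0 dh dq]; rewrite leqNgt; apply/negP => d_gt1.
  have dvd_q : (d %| q)%N by rewrite -(dvdn_pexp2r _ _ s_gt0).
  have := coprime_hq (pdiv d).
  rewrite mem_primes pdiv_prime // q_gt0 (dvdn_trans (pdiv_dvd d) dvd_q) => /(_ isT).
  by rewrite (dvdn_trans (dvdn_exp2r s (pdiv_dvd d)) dh).
Qed.

Lemma pow_coprime_mod (s q h : nat) :
  pow_coprime s q (h %% q ^ s) = pow_coprime s q h.
Proof.
apply: eq_in_all => p; rewrite mem_primes => /and3P [_ _ pq].
by rewrite /dvdn modn_dvdm // dvdn_exp2r.
Qed.

Lemma pow_coprimeM (s a b h : nat) : (0 < a)%N -> (0 < b)%N ->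
  pow_coprime s (a * b) h = pow_coprime s a h && pow_coprime s b h.
Proof.
by move=> a_gt0 b_gt0; rewrite /pow_coprime -all_cat; apply: eq_all_r => p;
  rewrite mem_cat primesM.
Qed.

Lemma pow_coprime_prime (s p h : nat) : prime p ->
  pow_coprime s p h = ~~ (p ^ s %| h)%N.
Proof. by move=> p_pr; rewrite /pow_coprime primes_prime // all_seq1. Qed.

Lemma pow_coprime_CRT (s a b i j : nat) : coprime a b ->
  pow_coprime s a (i * b ^ s + j * a ^ s) = pow_coprime s a i.
Proof.
move=> cab; apply: eq_in_all => p; rewrite mem_primes => /and3P [p_pr _ pa].
rewrite dvdn_addl; last by rewrite dvdn_mull // dvdn_exp2r.
rewrite Gauss_dvdl // coprimeXl // coprimeXr // prime_coprime //; apply/negP => pb.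
have : (p %| gcdn a b)%N by rewrite dvdn_gcd pa pb.
by rewrite (eqP cab) dvdn1 => /eqP p1; rewrite p1 in p_pr.
Qed.

Lemma coprime_mul_mod_inj {A B i j : nat} : coprime A B ->
  (i < A)%N -> (j < A)%N -> i * B = j * B %[mod A] -> i = j.
Proof.
move=> cAB; wlog le_ji : i j / (j <= i)%N.
  by move=> wlog_le iA jA eq_ij; case: (leqP j i) => [|/ltnW] le;
    [exact: wlog_le | exact/esym/wlog_le].
move=> iA jA /eqP; rewrite eqn_mod_dvd ?leq_mul2r ?le_ji ?orbT // -mulnBl Gauss_dvdl //.
by case: (posnP (i - j)) => [|/dvdn_leq le_A /le_A]; lia.
Qed.

Lemma omegaM_pfactor (m p a : nat) : prime p -> (0 < m)%N -> ~~ (p %| m)%N ->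
  (0 < a)%N -> omega (m * p ^ a) = (omega m).+1.
Proof.
move=> p_pr m_gt0 p_ndvd_m a_gt0; rewrite /omega -[(size _).+1]/(size (p :: primes m)).
apply: perm_size; apply: uniq_perm; rewrite ?primes_uniq //=.
  by rewrite primes_uniq andbT mem_primes p_pr m_gt0.
move=> x; rewrite primesM ?expn_gt0 ?(prime_gt0 p_pr) // primesX // (primes_prime p_pr).
by rewrite mem_seq1 in_cons orbC.
Qed.

Section NonnegativeSums.
Context {R : numDomainType}.

Lemma ler_sum_uniq_subset (T : eqType) (r1 r2 : seq T) (F : T -> R) :
  uniq r1 -> uniq r2 -> {subset r1 <= r2} -> (forall x, 0 <= F x) ->
  \sum_(x <- r1) F x <= \sum_(x <- r2) F x.
Proof.
move=> uniq_r1 uniq_r2 sub12 F_ge0.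
rewrite [leRHS](bigID (mem r1)) /=.
have -> : \sum_(x <- r2 | x \in r1) F x = \sum_(x <- r1) F x.
  rewrite -big_filter; apply: perm_big; apply: uniq_perm; rewrite ?filter_uniq // => x.
  by rewrite mem_filter; case: (boolP (x \in r1)) => // /sub12 ->.
by rewrite lerDl sumr_ge0.
Qed.

Lemma sum_divisors_mul_pfactor_ge (F : nat -> R) {m p a : nat} :
  prime p -> (0 < m)%N -> ~~ (p %| m)%N -> (0 < a)%N -> (forall q, 0 <= F q) ->
  \sum_(q <- divisors m) F q + \sum_(q <- divisors m) F (p * q)%N
    <= \sum_(q <- divisors (m * p ^ a)) F q.
Proof.
move=> p_pr m_gt0 p_ndvd_m a_gt0 F_ge0.
have mpa_gt0 : (0 < m * p ^ a)%N by rewrite muln_gt0 m_gt0 expn_gt0 prime_gt0.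
have mulp_inj : injective (muln p).
  by move=> x y /(congr1 (divn^~ p)) /=; rewrite !mulKn ?prime_gt0.
rewrite -(big_map (muln p) xpredT F) -big_cat; apply: ler_sum_uniq_subset => //.
- rewrite cat_uniq divisors_uniq map_inj_uniq // divisors_uniq andbT /=.
  apply/hasPn => _ /mapP [y _ ->]; rewrite -dvdn_divisors //.
  by apply: contra p_ndvd_m; apply: dvdn_trans; apply: dvdn_mulr.
- exact: divisors_uniq.
- move=> x; rewrite mem_cat -!dvdn_divisors // => /orP [xm|/mapP [y ym ->]].
    exact: dvdn_mulr.
  rewrite -dvdn_divisors // in ym.
  by rewrite mulnC dvdn_mul // -{1}(expn1 p) dvdn_exp2l.
Qed.

Lemma sum_divisors_le_sum_mul (F : nat -> nat -> R) (K : nat) :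
  (forall k q, 0 <= F k q) ->
  \sum_(1 <= k < K) \sum_(q <- divisors k) F k q
    <= \sum_(1 <= q < K) \sum_(1 <= m < K) F (m * q)%N q.
Proof.
move=> F_ge0.
have divisorsE k : (1 <= k < K)%N ->
    \sum_(q <- divisors k) F k q = \sum_(q <- index_iota 1 K | (q %| k)%N) F k q.
  move=> /andP [k_gt0 lt_kK]; rewrite -[RHS]big_filter; apply: perm_big.
  apply: uniq_perm; rewrite ?divisors_uniq ?filter_uniq ?iota_uniq // => x.
  rewrite mem_filter mem_iota -dvdn_divisors //.
  case: (boolP (x %| k)%N) => //= xk.
  by have := dvdn_leq k_gt0 xk; have := dvdn_gt0 k_gt0 xk; lia.
rewrite big_nat (eq_bigr _ divisorsE) -big_nat.
rewrite (exchange_big_dep xpredT) //= !big_nat; apply: ler_sum => q /andP [q_gt0 _].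
rewrite -(big_map (muln^~ q) xpredT (F^~ q)) -big_filter.
apply: ler_sum_uniq_subset => //.
- by rewrite filter_uniq ?iota_uniq.
- rewrite map_inj_uniq ?iota_uniq // => x y /eqP.
  by rewrite eqn_mul2r eqn0Ngt q_gt0 => /eqP.
- move=> x; rewrite mem_filter mem_iota => /and3P [qx x_gt0 lt_xK].
  apply/mapP; exists (x %/ q)%N; last by rewrite divnK.
  rewrite mem_iota divn_gt0 // dvdn_leq //=.
  by have := leq_div x q; lia.
Qed.

End NonnegativeSums.

Section CohenRamanujan.
Variables (R : realType) (s : nat).
Hypothesis s_gt0 : (0 < s)%N.
Local Notation c q N := (@cohen_ramanujan R s q N).

Lemma cohen_ramanujanE (q N : nat) : (0 < q)%N ->
  c q N = \sum_(0 <= h < q ^ s | pow_coprime s q h)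
            expi2pi ((N * h)%:R / (q ^ s)%:R : R).
Proof.
move=> q_gt0; have qs_gt0 : (0 < q ^ s)%N by rewrite expn_gt0 q_gt0.
rewrite /cohen_ramanujan big_nat_cond.
rewrite (eq_bigl (fun h => (1 <= h < (q ^ s).+1)%N && pow_coprime s q h)); last first.
  by move=> h /=; case: (boolP (1 <= h < _)%N) => //= /andP [h_gt0 _]; rewrite gen_gcd_eq1.
rewrite -big_nat_cond big_mkcond [RHS]big_mkcond big_nat_recr //= [RHS](big_ltn qs_gt0).
rewrite /= addrC; congr (_ + _).
rewrite -[in LHS]pow_coprime_mod modnn muln0 mul0r natrM mulfK ?expi2pi_nat ?expi2pi0 //.
by rewrite pnatr_eq0 -lt0n.
Qed.

Lemma cohen_ramanujan1 (N : nat) : c 1 N = 1.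
Proof. by rewrite cohen_ramanujanE // exp1n big_mkcond big_nat1 /= muln0 mul0r expi2pi0. Qed.

Lemma cohen_ramanujanM (a b N : nat) : (0 < a)%N -> (0 < b)%N -> coprime a b ->
  c (a * b) N = c a N * c b N.
Proof.
move=> a_gt0 b_gt0 cab.
rewrite !cohen_ramanujanE ?muln_gt0 ?a_gt0 //.
set A := (a ^ s)%N; set B := (b ^ s)%N.
have A_gt0 : (0 < A)%N by rewrite expn_gt0 a_gt0.
have B_gt0 : (0 < B)%N by rewrite expn_gt0 b_gt0.
have AB_gt0 : (0 < A * B)%N by rewrite muln_gt0 A_gt0.
have cAB : coprime A B by rewrite coprimeXl // coprimeXr.
have cBA : coprime B A by rewrite coprime_sym.
rewrite expnMn -/A -/B !big_mkcond /= !big_mkord big_distrlr /= pair_big /= [RHS]big_mkcond /=.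
pose crt (ij : 'I_A * 'I_B) := Ordinal (ltn_pmod (ij.1 * B + ij.2 * A) AB_gt0).
have crt_inj : injective crt.
  move=> [i j] [i' j'] /(congr1 val) /= /eqP.
  rewrite chinese_remainder // => /andP [/eqP eqA /eqP eqB].
  have eq_i : i = i' :> nat.
    apply: (coprime_mul_mod_inj cAB (ltn_ord i) (ltn_ord i')).
    by move: eqA; rewrite ![(_ * B + _)%N]addnC !modnMDl.
  have eq_j : j = j' :> nat.
    apply: (coprime_mul_mod_inj cBA (ltn_ord j) (ltn_ord j')).
    by move: eqB; rewrite !modnMDl.
  by congr (_, _); apply: val_inj.
have crt_bij : bijective crt.
  by apply: (inj_card_bij crt_inj); rewrite card_prod !card_ord.
rewrite [LHS](reindex crt (onW_bij _ crt_bij)) /=; apply: eq_bigr => [[i j]] _ /=.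
rewrite expi2pi_modn // /A /B -expnMn pow_coprime_mod pow_coprimeM //.
rewrite pow_coprime_CRT // addnC pow_coprime_CRT 1?coprime_sym // -/A -/B.
case: (pow_coprime s a i) (pow_coprime s b j) => [] [] //=.
have A_neq0 : (A%:R : R) != 0 by rewrite pnatr_eq0 -lt0n.
have B_neq0 : (B%:R : R) != 0 by rewrite pnatr_eq0 -lt0n.
rewrite -expi2piD expnMn -/A -/B; congr expi2pi.
by rewrite !natrM natrD !natrM; field; rewrite A_neq0 B_neq0.
Qed.

Lemma cohen_ramanujan_prime_ge1 (p N : nat) : prime p -> 1 <= cabs (c p N).
Proof.
move=> p_pr; set P := (p ^ s)%N.
have P_gt1 : (1 < P)%N by rewrite -(exp1n s) ltn_exp2r // prime_gt1.
have P_gt0 : (0 < P)%N by apply: ltnW.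
have P_neq0 : (P%:R : R) != 0 by rewrite pnatr_eq0 -lt0n.
set z := expi2pi (N%:R / P%:R : R).
have ez h : expi2pi ((N * h)%:R / P%:R : R) = z ^+ h.
  by rewrite -expi2piMn natrM mulrCA mulrA.
pose S := \sum_(0 <= h < P) z ^+ h.
(* The only residue h < p^s with p^s | h is h = 0. *)
have cS : c p N = S - 1.
  rewrite cohen_ramanujanE ?prime_gt0 // -/P /S big_ltn // expr0 addrC addKr.
  rewrite (big_ltn_cond P_gt0) pow_coprime_prime // dvdn0 /= big_nat_cond [RHS]big_nat_cond.
  apply: eq_big => h; last by move=> _; rewrite ez.
  rewrite pow_coprime_prime //; case: (boolP (1 <= h < P)%N) => //= /andP [h_gt0 hP].
  by apply/negP => /(dvdn_leq h_gt0); lia.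
have zS : (z - 1) * S = 0.
  by rewrite /S big_mkord -subrX1 -ez natrM mulfK // expi2pi_nat subrr.
rewrite -lecR cabs_normr cS.
move/eqP: zS; rewrite mulf_eq0 => /orP [|/eqP ->]; last by rewrite sub0r normrN normr1.
rewrite subr_eq0 => /eqP z1.
rewrite /S (eq_big_nat _ _ (F2 := fun=> 1)) => [|h _]; last by rewrite z1 expr1n.
by rewrite sumr_const_nat subn0 -(natrB _ (ltnW P_gt1)) normr_nat ler1n subn_gt0.
Qed.

Lemma exp2_omega_le_sum_cohen_ramanujan (N k : nat) : (0 < k)%N ->
  (2 ^ omega k)%:R <= \sum_(q <- divisors k) cabs (c q N).
Proof.
have [K] := ubnP k; elim: K k => // K IHK k lt_kK k_gt0.
have [le_k1|lt1k] := leqP k 1.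
  rewrite (_ : k = 1)%N; last by lia.
  by rewrite /omega /= big_seq1 cohen_ramanujan1 /cabs Normc.normc1.
have p_pr : prime (pdiv k) by rewrite pdiv_prime.
have [m p_coprime_m def_k] := pfactor_coprime p_pr k_gt0.
set p := pdiv k in p_pr p_coprime_m def_k; set a := logn p k in def_k.
have a_gt0 : (0 < a)%N by rewrite logn_gt0 mem_primes p_pr k_gt0 pdiv_dvd.
have m_gt0 : (0 < m)%N by move: k_gt0; rewrite def_k muln_gt0 => /andP [].
have p_ndvd_m : ~~ (p %| m)%N by rewrite -prime_coprime.
have lt_mk : (m < k)%N.
  rewrite def_k -{1}(muln1 m) ltn_mul2l m_gt0 /= (leq_trans (prime_gt1 p_pr)) //.
  by rewrite -[X in (X <= _)%N]expn1 leq_pexp2l ?(prime_gt0 p_pr).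
have IHm := IHK m (leq_trans lt_mk (ltnSE lt_kK)) m_gt0.
rewrite def_k omegaM_pfactor // expnS natrM.
have F_ge0 q : 0 <= cabs (c q N) by apply: cabs_ge0.
apply: le_trans _ (sum_divisors_mul_pfactor_ge _ p_pr m_gt0 p_ndvd_m a_gt0 F_ge0).
have -> : \sum_(q <- divisors m) cabs (c (p * q) N) =
          cabs (c p N) * \sum_(q <- divisors m) cabs (c q N).
  rewrite big_distrr /=; apply: eq_big_seq => q; rewrite -dvdn_divisors // => qm.
  rewrite cohen_ramanujanM ?(prime_gt0 p_pr) ?(dvdn_gt0 m_gt0 qm) ?(coprime_dvdr qm) //.
  exact: Normc.normcM.
have cp_ge1 : 1 <= cabs (c p N) by exact: cohen_ramanujan_prime_ge1.
rewrite mulrC mulr_natr mulr2n lerD //.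
by rewrite -[X in X <= _]mul1r ler_pM // ?ler0n // (le_trans _ IHm) ?ler0n.
Qed.
End CohenRamanujan.

Theorem theorem5 (R : realType) (s n : nat) (hs : (0 < s)%N) (hn : (0 < n)%N)
  (f : nat -> R[i]) :
  (\sum_(1 <= q <oo)
     (\sum_(1 <= m <oo)
        ((cabs (fprime f (m * q)) / ((m * q) ^ s)%:R)
          * cabs (cohen_ramanujan s q (n ^ s)))%:E) < +oo)%E ->
  (\sum_(1 <= k <oo)
     ((2 ^ omega k)%:R * cabs (fprime f k) / (k ^ s)%:R)%:E < +oo)%E.
Proof.
pose a k := cabs (fprime f k) / (k ^ s)%:R.
pose c q := cabs (@cohen_ramanujan R s q (n ^ s)).
have a_ge0 k : 0 <= a k by rewrite divr_ge0 ?cabs_ge0.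
have ac_ge0 k q : 0 <= a k * c q by rewrite mulr_ge0 ?cabs_ge0.
apply: le_lt_trans; apply: lime_le.
  apply: is_cvg_nneseries => k _ _; rewrite lee_fin -mulrA mulr_ge0 ?ler0n //; exact: a_ge0.
apply: nearW => K /=; rewrite sumEFin.
apply: (@le_trans _ _ (\sum_(1 <= q < K) (\sum_(1 <= m < K) a (m * q)%N * c q)%:E)%E).
  rewrite sumEFin lee_fin; apply: le_trans _ (sum_divisors_le_sum_mul _ K ac_ge0).
  rewrite big_nat [leRHS]big_nat; apply: ler_sum => k /andP [k_gt0 _].
  rewrite -mulrA mulrC -big_distrr /=; apply: ler_wpM2l; first exact: a_ge0.
  exact: exp2_omega_le_sum_cohen_ramanujan _ hs _ _ k_gt0.
apply: (@le_trans _ _ (\sum_(1 <= q < K) \sum_(1 <= m <oo) (a (m * q)%N * c q)%:E)%E).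
  apply: lee_sum => q _; rewrite -sumEFin.
  by apply: nneseries_lim_ge => m _ _; rewrite lee_fin.
apply: nneseries_lim_ge => q _ _.
by apply: nneseries_ge0 => m _ _; rewrite lee_fin.
Qed.
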